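(* Let $\mathcal M\otimes\mathcal A_\varphi$ be the product of a labelled MDP $\mathcal M=(S,\mathit{Act},P,\mu)$ with labelling $L$ and a deterministic Streett automaton $\mathcal A_\varphi=(Q,2^{AP},\delta,q_0,\mathit{Acc})$, with state space $S\times Q$. Let $\pi$ be a stationary policy on the product, $\gamma\in(0,1)$, $(A,B)\in\mathit{Acc}$ (so $A,B\subseteq Q$), and $I\subseteq S\times Q$ measurable. Write $U^\otimes:=(S\times B)\cup\mathrm{Abs}_\pi\big((S\times(A\cup B))^c\big)$ (complement taken in $S\times Q$). Assume: (1) $I$ is absorbing under $\pi$ in the product and $\mu^\otimes(I)=1$; (2) $\Pr_\pi(\tau_{U^\otimes}<\infty\mid S_0=x)=1$ for all $x\in I$; (3) there is $\bar H<\infty$ with $\mathbb{E}_\pi[\tau_{U^\otimes}\mid S_0=x]\le\bar H$ for all $x\in((S\times A)\setminus(S\times B))\cap I$; (4) the reward is $r^\otimes((s,q),a,(s',q'))=\mathbf 1_{\{(s,q)\in U^\otimes\}}$. Then $W(s,q):=C-V^\pi(s,q)$ on $I$, with $C:=\frac1{1-\gamma}$, is a Streett supermartingale for $(S\times A,S\times B)$ on $\mathcal M\otimes\mathcal A_\varphi$ with supporting invariant $I$.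
   Context: An MDP $(S,\mathit{Act},P,\mu)$ has state/action spaces finite/countable or Borel subsets of Euclidean space, a stochastic kernel $P$ on $S$ given $S\times\mathit{Act}$ and initial distribution $\mu$. A labelled MDP additionally has a finite set $AP$ of atomic propositions and a labelling $L:S\to2^{AP}$. A deterministic Streett automaton is $(Q,2^{AP},\delta,q_0,\mathit{Acc})$ with finite $Q$, $\delta:Q\times2^{AP}\to Q$, $q_0\in Q$, and $\mathit{Acc}$ a finite set of pairs $(A_i,B_i)$, $A_i,B_i\subseteq Q$. The product MDP $\mathcal M\otimes\mathcal A_\varphi$ has state space $S\times Q$, actions $\mathit{Act}$, transitions from $(s,q)$ under $a$ to $(s',\delta(q,L(s)))$ with $s'\sim P(\cdot\mid s,a)$, and initial distribution $\mu^\otimes=\mu\otimes\delta_{q_0}$. A stationary policy $\pi$ is a stochastic kernel on actions given states; $\Pr_\pi(\cdot\mid S_0=x)$, $\mathbb{E}_\pi[\cdot\mid S_0=x]$ refer to the product process started at $x$. Value function: $V^\pi(x)=\mathbb{E}_\pi[\sum_{t\ge0}\gamma^t r^\otimes(S_t,A_t,S_{t+1})\mid S_0=x]$. A measurable set $X$ is absorbing if $\Pr_\pi(S_1\in X\mid S_0=x)=1$ for all $x\in X$; $\mathrm{Abs}_\pi(X):=\{x:\Pr_\pi(\forall t\ge0:S_t\in X\mid S_0=x)=1\}$; $\tau_U:=\inf\{t\ge0:S_t\in U\}$. Streett supermartingale (on a state space $\mathcal X$ with initial distribution $\nu$): for measurable $A',B',I\subseteq\mathcal X$, $W:I\to[0,\infty)$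 is a Streett supermartingale for $(A',B')$ with supporting invariant $I$ if $\nu(I)=1$, $\Pr_\pi(S_1\in I\mid S_0=x)=1$ for $x\in I$, there is $\varepsilon>0$ with $\mathbb{E}_\pi[W(S_1)\mid S_0=x]\le W(x)-\varepsilon$ for $x\in(A'\setminus B')\cap I$, and $\mathbb{E}_\pi[W(S_1)\mid S_0=x]\le W(x)$ for $x\in I\setminus(A'\cup B')$. *)

From Stdlib Require List.
From HB Require Import structures.
From mathcomp Require Import all_boot all_order all_algebra.
From mathcomp Require Import all_classical all_reals all_analysis.
Set Implicit Arguments. Unset Strict Implicit. Unset Printing Implicit Defensive.
Import Order.TTheory GRing.Theory Num.Theory.
Local Open Scope classical_set_scope.
Local Open Scope ring_scope.

(* Finite-dimensional distributions of the state-action process of the product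
   MDP M (x) A_phi under the stationary policy [pol], started at x = (s,q):
   A_t ~ pol(S_t), s_{t+1} ~ P(. | s_t, A_t), q_{t+1} = delta q_t (L s_t).
   [prod_fdd Cs x] is the probability (Ionescu-Tulcea) that
   (S_t, A_t) \in nth Cs t for all t < size Cs. *)
Fixpoint prod_fdd {R : realType} {dS dQ dA : measure_display}
  {S : measurableType dS} {Q : measurableType dQ} {Act : measurableType dA}
  {AP : finType}
  (P : R.-pker (S * Act)%type ~> S) (pol : R.-pker (S * Q)%type ~> Act)
  (L : S -> {set AP}) (delta : Q -> {set AP} -> Q)
  (Cs : seq (set ((S * Q) * Act)%type)) (x : (S * Q)%type) : \bar R :=
  match Cs with
  | [::] => 1%E
  | C :: Cs' =>
      (\int[pol x]_a ((\1_C (x, a))%:E *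
         \int[P (x.1, a)]_s' prod_fdd P pol L delta Cs' (s', delta x.2 (L x.1))))%E
  end.

(* (Omega, Pr x, St, At) realizes the product process started at x, for every
   start x: Pr x is the law Pr_pi( . | S_0 = x) of the state/action process
   (St t, At t)_t, characterized by its finite-dimensional distributions. *)
Definition product_process {R : realType} {dS dQ dA dO : measure_display}
  {S : measurableType dS} {Q : measurableType dQ} {Act : measurableType dA}
  {AP : finType} {Omega : measurableType dO}
  (P : R.-pker (S * Act)%type ~> S) (pol : R.-pker (S * Q)%type ~> Act)
  (L : S -> {set AP}) (delta : Q -> {set AP} -> Q)
  (Pr : (S * Q)%type -> probability Omega R)
  (St : nat -> Omega -> (S * Q)%type) (At : nat -> Omega -> Act) : Prop :=
  [/\ (forall t, measurable_fun setT (St t)),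
      (forall t, measurable_fun setT (At t)) &
      forall (x : (S * Q)%type) (Cs : seq (set ((S * Q) * Act)%type)),
        (forall C, List.In C Cs -> measurable C) ->
        Pr x (\bigcap_(t in [set t | (t < size Cs)%N])
                 [set w | nth set0 Cs t (St t w, At t w)])
        = prod_fdd P pol L delta Cs x].

Section ProcessDefs.
Context {R : realType} {dX dO dA : measure_display}
  {X : measurableType dX} {Omega : measurableType dO} {Act : measurableType dA}.
Variables (Pr : X -> probability Omega R) (St : nat -> Omega -> X).

Definition absorbing (Y : set X) : Prop :=
  forall x, Y x -> Pr x [set w | Y (St 1 w)] = 1%E.

Definition Abs (Y : set X) : set X :=
  [set x | Pr x (\bigcap_t [set w | Y (St t w)]) = 1%E].

Definition hit (U : set X) (w : Omega) : \bar R :=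
  ereal_inf [set (t%:R)%:E | t in [set t | U (St t w)]].

Definition value (At : nat -> Omega -> Act) (r : X -> Act -> X -> R)
  (gamma : R) (x : X) : R :=
  fine (\int[Pr x]_w
          \sum_(t <oo) ((gamma ^+ t * r (St t w) (At t w) (St t.+1 w))%:E))%E.

(* Streett supermartingale W for (A', B') with supporting invariant I,
   on state space X with initial distribution nu (W : I -> [0,oo) is
   represented by a real function on X that is nonnegative on I). *)
Definition streett_supermartingale (nu : set X -> \bar R)
  (A' B' I : set X) (W : X -> R) : Prop :=
  [/\ nu I = 1%E,
      (forall x, I x -> Pr x [set w | I (St 1 w)] = 1%E),
      (forall x, I x -> 0 <= W x),
      (exists2 eps : R, 0 < eps &
         forall x, ((A' `\` B') `&` I) x ->
           (\int[Pr x]_w (W (St 1 w))%:E <= (W x - eps)%:E)%E) &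
      (forall x, (I `\` (A' `|` B')) x ->
           (\int[Pr x]_w (W (St 1 w))%:E <= (W x)%:E)%E)].

End ProcessDefs.

Definition U_otimes {R : realType} {dS dQ dO : measure_display}
  {S : measurableType dS} {Q : measurableType dQ} {Omega : measurableType dO}
  (Pr : (S * Q)%type -> probability Omega R) (St : nat -> Omega -> (S * Q)%type)
  (A B : set Q) : set (S * Q)%type :=
  ([set: S] `*` B) `|` Abs Pr St (~` ([set: S] `*` (A `|` B))).

(* mu (x) delta_{q0} as a set function on S x Q *)
Definition init_otimes {R : realType} {dS dQ : measure_display}
  {S : measurableType dS} {Q : measurableType dQ}
  (mu : probability S R) (q0 : Q) (Y : set (S * Q)%type) : \bar R :=
  mu [set s | Y (s, q0)].

(* With reward 1_U the value V(x) = sum_t gamma^t Pr_x(S_t in U)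
   is the discounted occupation of U, so 0 <= V <= C and W = C - V >= 0. By the
   Markov property E_x[V(S_1)] = e(x) := sum_t gamma^t Pr_x(S_(t+1) in U), and
   V(x) = 1_U(x) + gamma e(x); hence off U, E_x[W(S_1)] = W(x) - (1 - gamma) e(x)
   with e(x) >= V(x).
   On (S x A) \ (S x B) the state is off U, and Markov's inequality for
   E[tau_U] <= Hbar gives Pr_x(tau_U <= n) >= 1/2 once n + 1 > 2 Hbar, so
   V(x) >= gamma^n / 2 and W decreases by at least (1 - gamma) gamma^n / 2.
   Outside S x (A u B) the state is either off U, where W does not increase in
   expectation, or in Abs((S x (A u B))^c); that set is absorbing, so from there
   S_t stays in U forever, e(x) = C and E_x[W(S_1)] = 0 <= W(x). *)

From Stdlib Require List.
From HB Require Import structures.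
From mathcomp Require Import all_boot all_order all_algebra.
From mathcomp Require Import all_classical all_reals all_analysis.
From mathcomp Require Import measurable_realfun ring lra.
Set Implicit Arguments. Unset Strict Implicit. Unset Printing Implicit Defensive.
Import Order.TTheory GRing.Theory Num.Theory.
Import numFieldTopology.Exports.
Local Open Scope classical_set_scope.
Local Open Scope ring_scope.

Section probability_lemmas.
Local Open Scope ereal_scope.
Context d (T : measurableType d) (R : realType) (m : probability T R).

Lemma ae_probability1 (E : set T) : measurable E -> m E = 1 ->
  \forall w \ae m, E w.
Proof.
move=> mE mE1; exists (~` E); split => //; first exact: measurableC.
by rewrite probability_setC // mE1 subee.
Qed.

Lemma probability1_ae (E : set T) : measurable E ->
  (\forall w \ae m, E w) -> m E = 1.
Proof.
move=> mE [N [mN mN0 sub]].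
have mCE0 : m (~` E) = 0.
  by apply: (subset_measure0 _ mN) => //; exact: measurableC.
by rewrite -[E]setCK probability_setC ?mCE0 ?sube0 //; exact: measurableC.
Qed.

Lemma integral_cstB (c : R) (g : T -> \bar R) : measurable_fun setT g ->
  (forall w, 0 <= g w <= c%:E) ->
  \int[m]_w (c%:E - g w) = c%:E - \int[m]_w g w.
Proof.
move=> mg g0c.
have g0 w : 0 <= g w by have /andP[] := g0c w.
have gc w : g w <= c%:E by have /andP[] := g0c w.
have gfin w : g w \is a fin_num by rewrite ge0_fin_numE // (le_lt_trans (gc w)) ?ltry.
have cg0 w : 0 <= c%:E - g w by rewrite subre_ge0.
have intgc : \int[m]_w g w <= c%:E.
  rewrite -[c%:E]mule1 -(probability_setT m) -integral_cst //.
  by apply: ge0_le_integral => // w _; exact: gc.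
have intgfin : \int[m]_w g w \is a fin_num.
  by rewrite ge0_fin_numE ?integral_ge0 // (le_lt_trans intgc) ?ltry.
have Ec : \int[m]_w (c%:E - g w) + \int[m]_w g w = c%:E.
  rewrite -ge0_integralD //; last exact: emeasurable_funB.
  rewrite (eq_integral (cst c%:E)) => [|w _]; last by rewrite subeK.
  by rewrite integral_cst // -[RHS]mule1; congr (_ * _); exact: probability_setT.
by rewrite -[in RHS]Ec addeK.
Qed.

Lemma integral_eq1_ae (g : T -> \bar R) : measurable_fun setT g ->
  (forall w, 0 <= g w <= 1) -> \int[m]_w g w = 1 -> \forall w \ae m, g w = 1.
Proof.
move=> mg g01 ig.
have mh : measurable_fun setT (fun w => 1 - g w).
  exact: emeasurable_funB (measurable_cst _) mg.
have : \int[m]_w `|1 - g w| = 0.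
  rewrite (eq_integral (fun w => 1 - g w)) => [|w _]; last first.
    by rewrite gee0_abs // subre_ge0; have /andP[] := g01 w.
  by rewrite integral_cstB // ig subee.
move/(ae_eq_integral_abs m measurableT mh); apply: filterS => w /(_ I) /=.
have /andP[g0 g1] := g01 w.
have gfin : g w \is a fin_num by rewrite ge0_fin_numE // (le_lt_trans g1) ?ltry.
by move/eqP; rewrite sube_eq ?add0e // => /eqP <-.
Qed.

End probability_lemmas.

(* The integral of a nonnegative function is a supremum over the simple
   functions below it, so monotonicity needs no measurability. *)
Lemma ge0_le_integral_nonmeasurable {d} {T : measurableType d} {R : realType}
  (m : {measure set T -> \bar R}) (f g : T -> \bar R) :
  (forall w, 0 <= f w)%E -> (forall w, f w <= g w)%E ->
  (\int[m]_w f w <= \int[m]_w g w)%E.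
Proof.
move=> f0 fg; have g0 w : (0 <= g w)%E by exact: le_trans (f0 w) (fg w).
rewrite !ge0_integralTE //; apply: ereal_sup_le => _ [h hf <-].
by exists h => //= x; exact: le_trans (hf x) (fg x).
Qed.

Section discounted_sum.
Local Open Scope ereal_scope.
Context {R : realType}.
Variable g : R.
Hypothesis g0 : (0 <= g)%R.

Definition disc_sum (p : nat -> \bar R) : \bar R :=
  \sum_(t <oo) ((g ^+ t)%:E * p t).

Lemma disc_sum_ge0 p : (forall t, 0 <= p t) -> 0 <= disc_sum p.
Proof.
by move=> p0; apply: nneseries_ge0 => t _ _; rewrite mule_ge0 ?lee_fin ?exprn_ge0.
Qed.

Lemma disc_sum_recl p : (forall t, 0 <= p t) ->
  disc_sum p = p 0%N + g%:E * disc_sum (fun t => p t.+1).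
Proof.
move=> p0; have gp0 t q : 0 <= (g ^+ t)%:E * p q.
  by rewrite mule_ge0 ?lee_fin ?exprn_ge0.
rewrite /disc_sum nneseries_recl // expr0 mul1e; congr (_ + _).
rewrite -(@nneseries_addn _ _ 1) // -nneseriesZl; last by move=> t _; exact: gp0.
by apply: eq_eseriesr => t _; rewrite addn1 exprS EFinM muleA.
Qed.

Lemma disc_sum_cst1 : (g < 1)%R -> disc_sum (cst 1) = ((1 - g)^-1)%:E.
Proof.
move=> g1; have gabs : (`|g| < 1)%R by rewrite ger0_norm.
rewrite /disc_sum (eq_eseriesr (fun t _ => mule1 _)).
transitivity (limn (EFin \o series (geometric 1 g))).
  apply/congr_lim/funext => n /=; rewrite sumEFin seriesEnat /=.
  by congr (_%:E); apply: eq_bigr => i _; rewrite /geometric /= mul1r.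
rewrite EFin_lim; last exact: is_cvg_geometric_series.
by congr (_%:E); rewrite -[RHS]mul1r; exact: cvg_lim (@cvg_geometric_series _ 1 _ gabs).
Qed.

Lemma disc_sum_le p : (g < 1)%R -> (forall t, 0 <= p t <= 1) ->
  disc_sum p <= ((1 - g)^-1)%:E.
Proof.
move=> g1 p01; rewrite -disc_sum_cst1 //; apply: lee_nneseries => [t _ _|t _].
  by rewrite mule_ge0 ?lee_fin ?exprn_ge0 //; have /andP[] := p01 t.
by apply: lee_wpmul2l; [rewrite lee_fin exprn_ge0 | have /andP[] := p01 t].
Qed.

Lemma disc_sum_fin_num p : (g < 1)%R -> (forall t, 0 <= p t <= 1) ->
  disc_sum p \is a fin_num.
Proof.
move=> g1 p01; rewrite ge0_fin_numE; last first.
  by apply: disc_sum_ge0 => t; case/andP: (p01 t).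
by rewrite (le_lt_trans (disc_sum_le g1 p01)) ?ltry.
Qed.

End discounted_sum.

Section mdp_kernel.
Context {R : realType} {dS dQ dA : measure_display}
  {S : measurableType dS} {Q : measurableType dQ} {Act : measurableType dA}.
Variable P : R.-pker (S * Act)%type ~> S.

Definition mdp_kernel (xa : ((S * Q) * Act)%type) : {measure set S -> \bar R} :=
  P (xa.1.1, xa.2).

Let measurable_mdp_kernel U : measurable U ->
  measurable_fun [set: (S * Q) * Act] (fun xa => mdp_kernel xa U).
Proof.
move=> mU; apply: measurableT_comp (measurable_kernel P U mU) _.
apply: measurable_fun_pair; last exact: measurable_snd.
exact: measurableT_comp measurable_fst measurable_fst.
Qed.

HB.instance Definition _ := isKernel.Build _ _ _ _ R mdp_kernel measurable_mdp_kernel.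

Let mdp_kernel1 xa : mdp_kernel xa [set: S] = 1%E.
Proof. exact: prob_kernel. Qed.

HB.instance Definition _ := Kernel_isProbability.Build _ _ _ _ _ mdp_kernel mdp_kernel1.

End mdp_kernel.

Section product_chain.
Local Open Scope ereal_scope.
Context {R : realType} {dS dQ dA dO : measure_display}
  {S : measurableType dS} {Q : measurableType dQ} {Act : measurableType dA}
  {AP : finType} {Omega : measurableType dO}.
Variables (P : R.-pker (S * Act)%type ~> S) (pol : R.-pker (S * Q)%type ~> Act)
  (L : S -> {set AP}) (delta : Q -> {set AP} -> Q)
  (Pr : (S * Q)%type -> probability Omega R)
  (St : nat -> Omega -> (S * Q)%type) (At : nat -> Omega -> Act).
Hypothesis measurable_Q : forall D : set Q, measurable D.
Hypothesis measurable_L : forall l : {set AP}, measurable (L @^-1` [set l]).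
Hypothesis process : product_process P pol L delta Pr St At.

Local Notation X := (S * Q)%type.

Definition aut_step (x : X) : Q := delta x.2 (L x.1).

Lemma measurable_aut_step : measurable_fun [set: X] aut_step.
Proof.
move=> _ D _; rewrite setTI.
have -> : aut_step @^-1` D =
    \bigcup_(l in [set: {set AP}]) (L @^-1` [set l] `*` [set q | D (delta q l)]).
  apply/seteqP; split => [[s q] /= Dx|[s q] [l _ [/= Ls Dq]]]; first by exists (L s).
  by rewrite /aut_step /= Ls.
apply: fin_bigcup_measurable; first exact: (@finite_finset _ [set: {set AP}]).
by move=> l _; exact: measurableX.
Qed.

Definition next_state (p : ((X * Act) * S)%type) : X := (p.2, aut_step p.1.1).

Lemma measurable_next_state : measurable_fun [set: (X * Act) * S] next_state.
Proof.
apply: measurable_fun_pair; first exact: measurable_snd.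
apply: measurableT_comp measurable_aut_step _.
exact: measurableT_comp measurable_fst measurable_fst.
Qed.

Definition step_kernel := pol \; (mdp_kernel P \; kdirac measurable_next_state).

Definition step_integral (f : X -> \bar R) (x : X) : \bar R :=
  \int[pol x]_a \int[P (x.1, a)]_s f (s, aut_step x).

Lemma integral_step_kernel f x : (forall y, 0 <= f y) -> measurable_fun setT f ->
  \int[step_kernel x]_y f y = step_integral f x.
Proof.
move=> f0 mf; rewrite /step_kernel /= integral_kcomp //; apply: eq_integral => a _.
rewrite /= integral_kcomp //; apply: eq_integral => s _.
by rewrite /kdirac /= integral_dirac // diracT mul1e.
Qed.

Lemma step_integral_ge0 f x : (forall y, 0 <= f y) -> 0 <= step_integral f x.
Proof. by move=> f0; apply: integral_ge0 => a _; exact: integral_ge0. Qed.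

Lemma measurable_step_integral f : (forall y, 0 <= f y) -> measurable_fun setT f ->
  measurable_fun setT (step_integral f).
Proof.
move=> f0 mf.
have -> : step_integral f = kfcomp pol (kfcomp (mdp_kernel P) (f \o next_state)) by [].
apply: measurable_kfcomp => [|xa]; last by apply: integral_ge0 => s _; exact: f0.
apply: measurable_kfcomp => [|?]; last exact: f0.
exact: measurableT_comp mf measurable_next_state.
Qed.

Lemma measurable_St t : measurable_fun [set: Omega] (St t).
Proof. by case: process. Qed.

Lemma measurable_St_preimage t (Y : set X) : measurable Y -> measurable (St t @^-1` Y).
Proof. by move=> mY; rewrite -[E in measurable E]setTI; exact: measurable_St. Qed.

Definition time_cylinder (t : nat) (Y : set X) : seq (set (X * Act)%type) :=
  rcons (nseq t [set: X * Act]) (Y `*` [set: Act]).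

Lemma time_cylinder_measurable t Y : measurable Y ->
  forall C, List.In C (time_cylinder t Y) -> measurable C.
Proof.
move=> mY; elim: t => [|t IH] C /=; first by move=> [<-|//]; exact: measurableX.
by move=> [<-|/IH//]; exact: measurableT.
Qed.

Lemma bigcap_time_cylinder t Y :
  \bigcap_(i in [set i | (i < size (time_cylinder t Y))%N])
     [set w | nth set0 (time_cylinder t Y) i (St i w, At i w)] = St t @^-1` Y.
Proof.
rewrite /time_cylinder size_rcons size_nseq; apply/seteqP; split => w /=.
  by move=> /(_ t (ltnSn t)); rewrite nth_rcons size_nseq ltnn eqxx; case.
move=> Yw i /= it; rewrite nth_rcons size_nseq nth_nseq.
case: ltnP => // ti; have -> : i = t by apply/eqP; rewrite eqn_leq ti -ltnS it.
by rewrite eqxx.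
Qed.

Definition prob_at (Y : set X) (t : nat) (x : X) : \bar R :=
  prod_fdd P pol L delta (time_cylinder t Y) x.

Lemma prob_atE Y t x : measurable Y -> Pr x (St t @^-1` Y) = prob_at Y t x.
Proof.
move=> mY; case: process => _ _ fdd.
by rewrite -bigcap_time_cylinder fdd //; exact: time_cylinder_measurable.
Qed.

Lemma prob_at0 Y x : prob_at Y 0 x = (\1_Y x)%:E.
Proof.
have indicX a : (\1_(Y `*` [set: Act]) (x, a))%:E = (\1_Y x)%:E :> \bar R.
  rewrite !indicE; congr (_%:R%:E); congr nat_of_bool.
  by apply/idP/idP => /set_mem H; apply/mem_set; [case: H|split].
rewrite /prob_at /time_cylinder /=.
under eq_integral => a _ do rewrite integral_cst // mul1e prob_kernel mule1 indicX.
by rewrite integral_cst // prob_kernel mule1.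
Qed.

Lemma prob_atS Y t x : prob_at Y t.+1 x = step_integral (prob_at Y t) x.
Proof. by apply: eq_integral => a _; rewrite indicT mul1e. Qed.

Lemma prob_at_ge0 Y t x : 0 <= prob_at Y t x.
Proof.
elim: t x => [|t IH] x; first by rewrite prob_at0 lee_fin.
by rewrite prob_atS; exact: step_integral_ge0.
Qed.

Lemma prob_at_le1 Y t x : measurable Y -> prob_at Y t x <= 1.
Proof.
move=> mY; rewrite -prob_atE //.
by apply: probability_le1; exact: measurable_St_preimage.
Qed.

Lemma measurable_prob_at Y t : measurable Y -> measurable_fun setT (prob_at Y t).
Proof.
move=> mY; elim: t => [|t IH].
  rewrite (_ : prob_at Y 0 = (fun x => (\1_Y x)%:E)); last first.
    by apply/funext => x; rewrite prob_at0.
  by apply/measurable_EFinP; exact: measurable_indic.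
rewrite (_ : prob_at Y t.+1 = step_integral (prob_at Y t)); last first.
  by apply/funext => x; rewrite prob_atS.
by apply: measurable_step_integral => // y; exact: prob_at_ge0.
Qed.

Lemma prob_at_le U V t x : measurable U -> measurable V -> U `<=` V ->
  prob_at U t x <= prob_at V t x.
Proof.
move=> mU mV UV; rewrite -!prob_atE //.
by apply: le_measure; rewrite ?inE; [exact: measurable_St_preimage..|move=> w /UV].
Qed.

(* The law of S_1 under Pr x is step_kernel x: both give
   Pr x (St 1 @^-1` A) = prob_at A 1 x on measurable sets. *)
Lemma integral_St1 f x : (forall y, 0 <= f y) -> measurable_fun setT f ->
  \int[Pr x]_w f (St 1 w) = step_integral f x.
Proof.
move=> f0 mf; rewrite -integral_step_kernel //.
have := ge0_integral_pushforward (measurable_St 1) (Pr x) measurableT mf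
  (fun y _ => f0 y).
rewrite preimage_setT -[\int[Pr x]_(w in setT) _]/(\int[Pr x]_w f (St 1 w)) => <-.
apply: eq_measure_integral; first exact: measurable_St.
move=> mS1 A mA _.
rewrite -[LHS]/(Pr x (St 1 @^-1` A)) prob_atE // prob_atS -integral_step_kernel.
- rewrite (eq_integral (fun y => (\1_A y)%:E)) => [|y _]; last by rewrite prob_at0.
  by rewrite integral_indic ?setIT.
- by move=> y; exact: prob_at_ge0.
- exact: measurable_prob_at.
Qed.

Lemma prob_atS_integral Y t x : measurable Y ->
  prob_at Y t.+1 x = \int[Pr x]_w prob_at Y t (St 1 w).
Proof.
move=> mY; rewrite prob_atS integral_St1 // => [y|]; first exact: prob_at_ge0.
exact: measurable_prob_at.
Qed.

Lemma AbsE Y : measurable Y ->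
  Abs Pr St Y = [set y | forall t, prob_at Y t y = 1].
Proof.
move=> mY; apply/seteqP; split => y /= Hy.
  move=> t; apply/le_anti; rewrite prob_at_le1 //= -Hy -prob_atE //.
  apply: le_measure; rewrite ?inE; [|exact: measurable_St_preimage|by move=> w /(_ t I)].
  by apply: bigcapT_measurable => i; exact: measurable_St_preimage.
apply: probability1_ae.
  by apply: bigcapT_measurable => t; exact: measurable_St_preimage.
have : \forall w \ae Pr y, forall t, Y (St t w).
  apply: ae_foralln => t; apply: ae_probability1; first exact: measurable_St_preimage.
  by rewrite prob_atE // Hy.
by apply: filterS => w Hw t _; exact: Hw.
Qed.

Lemma measurable_Abs Y : measurable Y -> measurable (Abs Pr St Y).
Proof.
move=> mY; rewrite AbsE //.
have -> : [set y | forall t, prob_at Y t y = 1] = \bigcap_t (prob_at Y t @^-1` [set 1]).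
  by apply/seteqP; split => [y H t _|y H t]; [exact: H|exact: H t I].
apply: bigcapT_measurable => t; rewrite -[E in measurable E]setTI.
by apply: measurable_prob_at => //; exact: emeasurable_set1.
Qed.

Lemma Abs_sub Y : measurable Y -> Abs Pr St Y `<=` Y.
Proof.
move=> mY y; rewrite AbsE // => /(_ 0%N); rewrite prob_at0 indicE.
case: (boolP (y \in Y)) => [/set_mem //|_].
by move/eqP; rewrite /= mulr0n eqe eq_sym oner_eq0.
Qed.

(* For y in Abs Y, each prob_at Y t (St 1 w) is bounded by 1 and integrates to
   prob_at Y t.+1 y = 1, so it is 1 almost surely. *)
Lemma Abs_absorbing Y : measurable Y -> absorbing Pr St (Abs Pr St Y).
Proof.
move=> mY y Hy; apply: probability1_ae.
  rewrite -[E in measurable E]/(St 1 @^-1` _).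
  by apply: measurable_St_preimage; exact: measurable_Abs.
rewrite AbsE // in Hy *.
have : \forall w \ae Pr y, forall t, prob_at Y t (St 1 w) = 1.
  apply: ae_foralln => t; apply: integral_eq1_ae.
  - exact: measurableT_comp (measurable_prob_at t mY) (measurable_St 1).
  - by move=> w; rewrite prob_at_ge0 prob_at_le1.
  - by rewrite -prob_atS_integral // Hy.
by apply: filterS.
Qed.

Lemma absorbing_prob_at Z t x : measurable Z -> absorbing Pr St Z -> Z x ->
  prob_at Z t x = 1.
Proof.
move=> mZ absZ; elim: t x => [|t IH] x Zx; first by rewrite prob_at0 indicE mem_set.
apply/le_anti; rewrite prob_at_le1 //= prob_atS_integral // -(absZ x Zx).
rewrite (_ : Pr x _ = \int[Pr x]_w (\1_(St 1 @^-1` Z) w)%:E); last first.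
  by rewrite integral_indic ?setIT //; exact: measurable_St_preimage.
apply: ge0_le_integral => //.
- by apply/measurable_EFinP; apply: measurable_indic; exact: measurable_St_preimage.
- exact: measurableT_comp (measurable_prob_at t mZ) (measurable_St 1).
- move=> w _; rewrite indicE; case: (boolP (w \in _)) => [/set_mem /IH -> //|_].
  exact: prob_at_ge0.
Qed.

Definition occupation (U : set X) (g : R) (x : X) : \bar R :=
  disc_sum g (fun t => prob_at U t x).

Lemma occupationE U g x : measurable U -> (0 <= g)%R ->
  occupation U g x =
  \int[Pr x]_w \sum_(t <oo) ((g ^+ t)%:E * (\1_(St t @^-1` U) w)%:E).
Proof.
move=> mU g0; have mUt t := measurable_St_preimage t mU.
rewrite integral_nneseries //.
- apply: eq_eseriesr => t _; rewrite ge0_integralZl ?lee_fin ?exprn_ge0 //.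
  + by rewrite integral_indic // setIT -prob_atE.
  + by apply/measurable_EFinP; exact: measurable_indic.
- by move=> t; apply/measurable_funeM/measurable_EFinP; exact: measurable_indic.
- by move=> t w _; rewrite -EFinM lee_fin mulr_ge0 // exprn_ge0.
Qed.

Lemma value_occupation U g r x : measurable U -> (0 <= g)%R ->
  (forall x a y, r x a y = \1_U x) ->
  value Pr St At r g x = fine (occupation U g x).
Proof.
move=> mU g0 hr; rewrite occupationE //; congr fine.
by apply: eq_integral => w _; apply: eq_eseriesr => t _; rewrite hr EFinM.
Qed.

Lemma occupation_bounds U g x : measurable U -> (0 <= g < 1)%R ->
  0 <= occupation U g x <= ((1 - g)^-1)%:E.
Proof.
move=> mU /andP[g0 g1]; have p01 t : 0 <= prob_at U t x <= 1.
  by rewrite prob_at_ge0 prob_at_le1.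
by rewrite disc_sum_ge0 ?disc_sum_le // => t; case/andP: (p01 t).
Qed.

Lemma occupation_fin_num U g x : measurable U -> (0 <= g < 1)%R ->
  occupation U g x \is a fin_num.
Proof.
move=> mU /andP[g0 g1]; apply: disc_sum_fin_num => // t.
by rewrite prob_at_ge0 prob_at_le1.
Qed.

Lemma measurable_occupation U g : measurable U -> (0 <= g)%R ->
  measurable_fun setT (occupation U g).
Proof.
move=> mU g0; apply: (@ge0_emeasurable_sum _ _ _ setT
  (fun t x => (g ^+ t)%:E * prob_at U t x) predT).
  by move=> t x _ _; rewrite mule_ge0 ?lee_fin ?exprn_ge0 ?prob_at_ge0.
by move=> t _; apply: measurable_funeM; exact: measurable_prob_at.
Qed.

Lemma integral_occupation_St1 U g x : measurable U -> (0 <= g)%R ->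
  \int[Pr x]_w occupation U g (St 1 w) = disc_sum g (fun t => prob_at U t.+1 x).
Proof.
move=> mU g0.
have mUt t : measurable_fun setT (fun w => prob_at U t (St 1 w)).
  exact: measurableT_comp (measurable_prob_at t mU) (measurable_St 1).
rewrite integral_nneseries //.
- apply: eq_eseriesr => t _.
  rewrite ge0_integralZl ?lee_fin ?exprn_ge0 ?(prob_atS_integral t x mU) //.
  by move=> w _; exact: prob_at_ge0.
- by move=> t; exact: measurable_funeM.
- by move=> t w _; rewrite mule_ge0 ?lee_fin ?exprn_ge0 ?prob_at_ge0.
Qed.

Lemma occupation_recl U g x : (0 <= g)%R ->
  occupation U g x = (\1_U x)%:E + g%:E * disc_sum g (fun t => prob_at U t.+1 x).
Proof.
by move=> g0; rewrite /occupation disc_sum_recl ?prob_at0 // => t; exact: prob_at_ge0.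
Qed.

Definition avoid_until (U : set X) (n : nat) : set Omega :=
  \bigcap_(t in [set t | (t <= n)%N]) (St t @^-1` (~` U)).

Lemma measurable_avoid_until U n : measurable U -> measurable (avoid_until U n).
Proof.
move=> mU; apply: bigcap_measurable; first by exists 0%N.
by move=> t _; apply: measurable_St_preimage; exact: measurableC.
Qed.

Lemma hit_ge0 U w : 0 <= hit (R:=R) St U w.
Proof. by apply: le_ereal_inf_tmp => _ [t _ <-]; rewrite lee_fin. Qed.

Lemma avoid_until_hit U n w :
  avoid_until U n w -> (n.+1)%:R%:E <= hit (R:=R) St U w.
Proof.
move=> Aw; apply: le_ereal_inf_tmp => _ [t /= Ut <-].
by rewrite lee_fin ler_nat ltnNge; apply/negP => tn; exact: Aw t tn Ut.
Qed.

Lemma avoid_until_markov U n x : measurable U ->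
  (n.+1)%:R%:E * Pr x (avoid_until U n) <= \int[Pr x]_w hit (R:=R) St U w.
Proof.
move=> mU; have mA := measurable_avoid_until n mU.
rewrite -(setIT (avoid_until U n)) -integral_indic // -ge0_integralZl //; last first.
  by apply/measurable_EFinP; exact: measurable_indic.
apply: ge0_le_integral_nonmeasurable => w; first by rewrite mule_ge0 ?lee_fin.
rewrite indicE; case: (boolP (w \in _)) => [/set_mem /avoid_until_hit|_].
  by rewrite mule1.
by rewrite mule0; exact: hit_ge0.
Qed.

Lemma occupation_ge_reach U g n x : measurable U -> (0 <= g <= 1)%R ->
  (g ^+ n)%:E * Pr x (~` avoid_until U n) <= occupation U g x.
Proof.
move=> mU /andP[g0 g1].
have mCA : measurable (~` avoid_until U n).
  exact/measurableC/measurable_avoid_until.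
have term_ge0 t w : 0 <= (g ^+ t)%:E * (\1_(St t @^-1` U) w)%:E.
  by rewrite -EFinM lee_fin mulr_ge0 // exprn_ge0.
rewrite occupationE // -(setIT (~` _)) -integral_indic //.
rewrite -ge0_integralZl ?lee_fin ?exprn_ge0 //; last first.
  by apply/measurable_EFinP; exact: measurable_indic.
apply: ge0_le_integral => //.
- by move=> w _; rewrite -EFinM lee_fin mulr_ge0 // exprn_ge0.
- by apply/measurable_funeM/measurable_EFinP; exact: measurable_indic.
- apply: (@ge0_emeasurable_sum _ _ _ setT _ predT) => [t w _ _|t _]; first exact: term_ge0.
  apply/measurable_funeM/measurable_EFinP; apply: measurable_indic.
  exact: measurable_St_preimage.
move=> w _; rewrite indicE; case: (boolP (w \in _)) => [/set_mem reach|_]; last first.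
  by rewrite mulr0n mule0; apply: nneseries_ge0 => t _ _; exact: term_ge0.
have [t tn Ut] : exists2 t, (t <= n)%N & U (St t w).
  by apply: contrapT => H; apply: reach => t /= tn Ut; apply: H; exists t.
apply: le_trans (nneseries_lim_ge t.+1 (fun i _ _ => term_ge0 i w)).
rewrite big_nat_recr //= indicE mem_set // mulr1n mule1 mule1.
apply: le_trans (leeDr _ _); last by apply: sume_ge0 => i _; exact: term_ge0.
by rewrite lee_fin; exact: ler_wiXn2l.
Qed.

Lemma occupation_lb U g x (Hbar : R) n : measurable U -> (0 <= g <= 1)%R ->
  \int[Pr x]_w hit (R:=R) St U w <= Hbar%:E -> (2 * Hbar < n.+1%:R)%R ->
  ((g ^+ n) / 2)%:E <= occupation U g x.
Proof.
move=> mU g01 hitH Hn; have mA := measurable_avoid_until n mU.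
have pE : Pr x (avoid_until U n) = (fine (Pr x (avoid_until U n)))%:E.
  by rewrite fineK // fin_num_measure.
set p := fine _ in pE.
have p0 : (0 <= p)%R by rewrite -lee_fin -pE.
have p_half : (p <= 1 / 2)%R.
  have := le_trans (avoid_until_markov n x mU) hitH.
  by rewrite pE -EFinM lee_fin; have : (0 < n.+1%:R :> R)%R by []; nra.
apply: le_trans (occupation_ge_reach n x mU g01).
rewrite probability_setC // pE -EFinB -EFinM lee_fin.
have : (0 <= g ^+ n)%R by rewrite exprn_ge0 //; case/andP: g01.
nra.
Qed.

Let measurable_outside (A B : set Q) : measurable (~` ([set: S] `*` (A `|` B))).
Proof. by apply/measurableC; exact: measurableX. Qed.

Lemma measurable_U_otimes A B : measurable (U_otimes Pr St A B).
Proof.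
apply: measurableU; first exact: measurableX.
exact: measurable_Abs (measurable_outside A B).
Qed.

Lemma U_otimes_notin A B x : (([set: S] `*` A) `\` ([set: S] `*` B)) x ->
  ~ U_otimes Pr St A B x.
Proof.
move=> [[_ Ax] nBx] [//|/(Abs_sub (measurable_outside A B))].
by apply; split => //; left.
Qed.

Lemma U_otimes_full A B x t : ~ ([set: S] `*` B) x -> U_otimes Pr St A B x ->
  prob_at (U_otimes Pr St A B) t x = 1.
Proof.
have mY := measurable_outside A B; have mU := measurable_U_otimes A B.
move=> nBx [/nBx//|AbsYx]; apply/le_anti; rewrite prob_at_le1 //=.
rewrite -(absorbing_prob_at t (measurable_Abs mY) (Abs_absorbing mY) AbsYx).
by apply: prob_at_le => //; [exact: measurable_Abs|right].
Qed.

Section value_drift.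
Variables (gamma : R) (U : set X) (r : X -> Act -> X -> R).
Hypotheses (gamma01 : (0 < gamma < 1)%R) (mU : measurable U)
  (reward_U : forall x a y, r x a y = \1_U x).

Local Notation V := (value Pr St At r gamma).
Local Notation C := ((1 - gamma)^-1)%R.
Local Notation next_occupation x := (disc_sum gamma (fun t => prob_at U t.+1 x)).

Let gamma0 : (0 <= gamma)%R. Proof. by case/andP: gamma01 => /ltW. Qed.
Let gamma1 : (gamma < 1)%R. Proof. by case/andP: gamma01. Qed.
Let gamma_ge0_lt1 : (0 <= gamma < 1)%R. Proof. by rewrite gamma0 gamma1. Qed.

Let occupation_fin x : occupation U gamma x \is a fin_num.
Proof. exact: occupation_fin_num. Qed.

Let next_occupation_fin x : next_occupation x \is a fin_num.
Proof. by apply: disc_sum_fin_num => // t; rewrite prob_at_ge0 prob_at_le1. Qed.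

Lemma value_bounds x : (0 <= V x <= C)%R.
Proof.
case/andP: (occupation_bounds x mU gamma_ge0_lt1) => o0 oC.
by rewrite (value_occupation _ mU) // -2!lee_fin fineK // o0 oC.
Qed.

Lemma next_occupation_ge0 x : (0 <= fine (next_occupation x))%R.
Proof. by apply: fine_ge0; apply: disc_sum_ge0 => // t; exact: prob_at_ge0. Qed.

Lemma integral_value_gap x :
  \int[Pr x]_w ((C - V (St 1 w))%:E) = (C - fine (next_occupation x))%:E.
Proof.
under eq_integral => w _ do rewrite (value_occupation _ mU) // EFinB fineK //.
rewrite integral_cstB ?integral_occupation_St1 ?EFinB ?fineK //.
- exact: measurableT_comp (measurable_occupation mU gamma0) (measurable_St 1).
- by move=> w; exact: occupation_bounds.
Qed.

Lemma value_notin x : ~ U x -> V x = (gamma * fine (next_occupation x))%R.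
Proof.
move=> Ux; rewrite (value_occupation _ mU) // occupation_recl // indicE memNset //.
by rewrite /= mulr0n add0e fineM.
Qed.

Lemma value_le_next_occupation x : ~ U x -> (V x <= fine (next_occupation x))%R.
Proof.
by move=> Ux; rewrite value_notin // ler_piMl ?next_occupation_ge0 ?ltW.
Qed.

Lemma integral_value_gap_notin x : ~ U x ->
  \int[Pr x]_w ((C - V (St 1 w))%:E)
  = ((C - V x) - (1 - gamma) * fine (next_occupation x))%:E.
Proof. by move=> Ux; rewrite integral_value_gap value_notin //; congr (_%:E); ring. Qed.

Lemma integral_value_gap_full x : (forall t, prob_at U t.+1 x = 1) ->
  \int[Pr x]_w ((C - V (St 1 w))%:E) = 0.
Proof.
move=> full; rewrite integral_value_gap.
rewrite (_ : (fun t => prob_at U t.+1 x) = cst 1) ?disc_sum_cst1 ?subrr //.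
by apply/funext => t; exact: full.
Qed.

End value_drift.

Lemma value_streett_supermartingale (mu : probability S R) (q0 : Q)
    (gamma : R) (A B : set Q) (I : set X) (r : X -> Act -> X -> R) (Hbar : R) :
  (0 < gamma < 1)%R -> absorbing Pr St I -> init_otimes mu q0 I = 1 ->
  (forall x, ((([set: S] `*` A) `\` ([set: S] `*` B)) `&` I) x ->
     \int[Pr x]_w hit (R:=R) St (U_otimes Pr St A B) w <= Hbar%:E) ->
  (forall x a y, r x a y = \1_(U_otimes Pr St A B) x) ->
  streett_supermartingale Pr St (init_otimes mu q0)
    ([set: S] `*` A) ([set: S] `*` B) I
    (fun x => (1 - gamma)^-1 - value Pr St At r gamma x)%R.
Proof.
move=> g01 absI initI hitH reward; have mU := measurable_U_otimes A B.
have /andP[g0 g1] := g01; have g0' := ltW g0.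
have value_leC x := proj2 (andP (value_bounds g01 mU reward x)).
split => //.
- by move=> x _; rewrite subr_ge0.
- set n := Num.truncn (2 * Hbar).
  exists ((1 - gamma) * (gamma ^+ n / 2))%R.
    by rewrite mulr_gt0 ?subr_gt0 ?divr_gt0 ?exprn_gt0.
  move=> x [ABx Ix]; have nUx := U_otimes_notin ABx.
  rewrite (integral_value_gap_notin g01 mU reward nUx) lee_fin lerD2l lerN2.
  rewrite ler_pM2l ?subr_gt0 //.
  apply: le_trans (value_le_next_occupation g01 mU reward nUx).
  rewrite (value_occupation _ mU) // -lee_fin fineK ?occupation_fin_num ?g0' //.
  apply: occupation_lb (hitH x (conj ABx Ix)) (truncnS_gt _) => //.
  by rewrite g0' ltW.
- move=> x [Ix nABx]; have nBx : ~ ([set: S] `*` B) x by move=> Bx; apply: nABx; right.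
  have [Ux|nUx] := pselect (U_otimes Pr St A B x).
    rewrite (integral_value_gap_full g01 mU reward) ?lee_fin ?subr_ge0 //.
    by move=> t; exact: U_otimes_full.
  rewrite (integral_value_gap_notin g01 mU reward nUx) lee_fin gerBl.
  by rewrite mulr_ge0 ?subr_ge0 ?(ltW g1) ?next_occupation_ge0.
Qed.

End product_chain.

Theorem corollary1 (R : realType) (dS dQ dA dO : measure_display)
  (S : measurableType dS) (Q : measurableType dQ) (Act : measurableType dA)
  (AP : finType)
  (P : R.-pker (S * Act)%type ~> S) (mu : probability S R)
  (L : S -> {set AP})
  (delta : Q -> {set AP} -> Q) (q0 : Q) (Acc : seq (set Q * set Q))
  (pol : R.-pker (S * Q)%type ~> Act)
  (Omega : measurableType dO) (Pr : (S * Q)%type -> probability Omega R)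
  (St : nat -> Omega -> (S * Q)%type) (At : nat -> Omega -> Act)
  (gamma : R) (A B : set Q) (I : set (S * Q)%type)
  (r : (S * Q)%type -> Act -> (S * Q)%type -> R) (Hbar : R) :
  finite_set [set: Q] ->
  (forall D : set Q, measurable D) ->
  (forall l : {set AP}, measurable (L @^-1` [set l])) ->
  product_process P pol L delta Pr St At ->
  0 < gamma < 1 ->
  List.In (A, B) Acc ->
  measurable I ->
  absorbing Pr St I ->
  init_otimes mu q0 I = 1%E ->
  (forall x, I x -> Pr x [set w | (hit (R:=R) St (U_otimes Pr St A B) w < +oo)%E] = 1%E) ->
  (forall x, ((([set: S] `*` A) `\` ([set: S] `*` B)) `&` I) x ->
     (\int[Pr x]_w hit (R:=R) St (U_otimes Pr St A B) w <= Hbar%:E)%E) ->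
  (forall x a y, r x a y = \1_(U_otimes Pr St A B) x) ->
  streett_supermartingale Pr St (init_otimes mu q0)
    ([set: S] `*` A) ([set: S] `*` B) I
    (fun x => (1 - gamma)^-1 - value Pr St At r gamma x).
Proof.
move=> _ measurable_Q measurable_L process g01 _ _ absI initI _ hitH reward.
exact (value_streett_supermartingale measurable_Q measurable_L process
  g01 absI initI hitH reward).
Qed.
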